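(* Let $\mathcal C$ be a discard category and let $\alpha,\beta$ be two regular stateful morphism sequences over $\mathcal C$ with the same input sequence $(A_i)_{i\ge1}$ and the same output sequence $(B_i)_{i\ge1}$. If $\alpha\equiv\beta$, then $\mathrm{FA}_k(\alpha)=\mathrm{FA}_k(\beta)$ for every $k\ge1$.
   Context: Monoidal categories are treated as strict (associators and unitors suppressed); $\sigma$ denotes the symmetry. A discard category is a symmetric monoidal category $(\mathcal C,\otimes,I)$ together with, for every object $A$, a morphism $\top_A:A\to I$ (the discard) such that $\top_I=\mathrm{id}_I$ and $\top_{A\otimes B}=\top_A\otimes\top_B$. A morphism $f:A\to B$ is causal if $\top_B\circ f=\top_A$. A stateful morphism sequence $\alpha$ over $\mathcal C$ consists of objects $(A_i)_{i\ge1}$ (inputs), $(B_i)_{i\ge1}$ (outputs), $(M_i)_{i\ge0}$ (memories) with $M_0=I$, and morphisms (layers) $\alpha_i\in\mathcal C(A_i\otimes M_{i-1},B_i\otimes M_i)$ for $i\ge1$. It is regular if there is $n$ such that for all $k\ge n$: $A_k=A_n$, $B_k=B_n$, $M_k=M_n$ and $\alpha_k=\alpha_n$. Composition and tensor of stateful sequences are defined layerwise: the memory of $\beta\circ\alpha$ (resp. $\alpha\otimes\beta$) at tick $k$ is $M^\alpha_k\otimes M^\beta_k$, and its $k$-th layer applies $\alpha_k$ and then $\beta_k$ (resp. $\alpha_k$ and $\beta_k$ side by side), with symmetries rearranging wires. The delay $D\alpha$ has $(D\alpha)_1=\mathrm{id}_I$ (with first input, output and memory $I$) and $(D\alpha)_k=\alpha_{k-1}$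 for $k\ge2$. Finite approximations: put $\Phi_1=\alpha_1:A_1\to B_1\otimes M_1$ and $\Phi_{k+1}=(\mathrm{id}_{B_1\otimes\cdots\otimes B_k}\otimes\alpha_{k+1})\circ(\mathrm{id}_{B_1\otimes\cdots\otimes B_k}\otimes\sigma_{M_k,A_{k+1}})\circ(\Phi_k\otimes\mathrm{id}_{A_{k+1}})$, a morphism $A_1\otimes\cdots\otimes A_{k+1}\to B_1\otimes\cdots\otimes B_{k+1}\otimes M_{k+1}$. Then $\mathrm{FA}_k(\alpha):=(\mathrm{id}_{B_1\otimes\cdots\otimes B_k}\otimes\top_{M_k})\circ\Phi_k$. The congruence $\equiv$: judgments $\Gamma\vdash\alpha=\beta$ between parallel regular stateful sequences, $\Gamma$ a set of such equations, are derived (by well-founded, possibly infinitely branching derivations) from: (hyp) $\Gamma\vdash\alpha=\beta$ if $(\alpha=\beta)\in\Gamma$; (CM) for $k\ge1$, $\beta_k\in\mathcal C(A_k\otimes M_{k-1},B_k\otimes N)$, a causal $c\in\mathcal C(N,M_k)$ and $\gamma\in\mathcal C(A_{k+1}\otimes M_k,B_{k+1}\otimes M_{k+1})$, the sequence with layers $k,k+1$ equal to $(\mathrm{id}\otimes c)\circ\beta_k,\gamma$ equals the sequence (memory $N$ at tick $k$) with layers $\beta_k,\gamma\circ(\mathrm{id}\otimes c)$, all other layers identical; (IM) for an idempotent $\pi\in\mathcal C(M_k,M_k)$, the sequence with layers $k,k+1$ equal to $(\mathrm{id}\otimes\pi)\circ\beta_k,\gamma$ equals the sequence with layers $(\mathrm{id}\otimes\pi)\circ\beta_k,\gamma\circ(\mathrm{id}\otimes\pi)$,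 others identical; reflexivity, symmetry, transitivity; closure under $\gamma\circ-$, $-\circ\gamma$, $\gamma\otimes-$, $-\otimes\gamma$; and coinduction: if $(\alpha^{(n)})_{n\ge0},(\beta^{(n)})_{n\ge0}$ are such that for every $n$, $\Gamma\cup\{D\alpha^{(n+1)}=D\beta^{(n+1)}\}\vdash\alpha^{(n)}=\beta^{(n)}$, then $\Gamma\vdash\alpha^{(0)}=\beta^{(0)}$. We write $\alpha\equiv\beta$ iff $\emptyset\vdash\alpha=\beta$. *)

From Stdlib Require Import Arith.

Set Implicit Arguments.

(* Morphisms form a single type with domain/codomain maps, so that the  *)
(* strictness equations on objects (associativity, unit) are plain      *)
(* equalities and no casts are needed.  C(A,B) = {f | dom f = A /\      *)
(* cod f = B}.                                                          *)

Record discard_cat := DiscardCat {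
  Obj : Type;
  Mor : Type;
  dom : Mor -> Obj;
  cod : Mor -> Obj;
  idm : Obj -> Mor;
  comp : Mor -> Mor -> Mor;            (* comp g f = g o f *)
  ten : Obj -> Obj -> Obj;
  tenm : Mor -> Mor -> Mor;
  unit_obj : Obj;
  sym : Obj -> Obj -> Mor;
  disc : Obj -> Mor;

  dom_idm : forall A, dom (idm A) = A;
  cod_idm : forall A, cod (idm A) = A;
  dom_comp : forall f g, cod f = dom g -> dom (comp g f) = dom f;
  cod_comp : forall f g, cod f = dom g -> cod (comp g f) = cod g;
  comp_idl : forall f, comp (idm (cod f)) f = f;
  comp_idr : forall f, comp f (idm (dom f)) = f;
  comp_assoc : forall f g h, cod f = dom g -> cod g = dom h ->
      comp h (comp g f) = comp (comp h g) f;

  dom_tenm : forall f g, dom (tenm f g) = ten (dom f) (dom g);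
  cod_tenm : forall f g, cod (tenm f g) = ten (cod f) (cod g);
  ten_assoc : forall A B C, ten (ten A B) C = ten A (ten B C);
  ten_unitl : forall A, ten unit_obj A = A;
  ten_unitr : forall A, ten A unit_obj = A;
  tenm_assoc : forall f g h, tenm (tenm f g) h = tenm f (tenm g h);
  tenm_unitl : forall f, tenm (idm unit_obj) f = f;
  tenm_unitr : forall f, tenm f (idm unit_obj) = f;
  tenm_idm : forall A B, tenm (idm A) (idm B) = idm (ten A B);
  tenm_comp : forall f g f' g', cod f = dom g -> cod f' = dom g' ->
      tenm (comp g f) (comp g' f') = comp (tenm g g') (tenm f f');

  dom_sym : forall A B, dom (sym A B) = ten A B;
  cod_sym : forall A B, cod (sym A B) = ten B A;
  sym_nat : forall f g,
      comp (sym (cod f) (cod g)) (tenm f g) = comp (tenm g f) (sym (dom f) (dom g));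
  sym_inv : forall A B, comp (sym B A) (sym A B) = idm (ten A B);
  sym_hex : forall A B C,
      sym A (ten B C) = comp (tenm (idm B) (sym A C)) (tenm (sym A B) (idm C));
  sym_unit : forall A, sym A unit_obj = idm A;

  dom_disc : forall A, dom (disc A) = A;
  cod_disc : forall A, cod (disc A) = unit_obj;
  disc_unit : disc unit_obj = idm unit_obj;
  disc_ten : forall A B, disc (ten A B) = tenm (disc A) (disc B)
}.

Arguments idm {_} _.
Arguments comp {_} _ _.
Arguments ten {_} _ _.
Arguments tenm {_} _ _.
Arguments unit_obj {_}.
Arguments sym {_} _ _.
Arguments disc {_} _.
Arguments dom {_} _.
Arguments cod {_} _.

Definition causal (C : discard_cat) (f : Mor C) : Prop :=
  comp (disc (cod f)) f = disc (dom f).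

Arguments causal {C} f.

Definition idempotent (C : discard_cat) (f : Mor C) : Prop :=
  dom f = cod f /\ comp f f = f.

Arguments idempotent {C} f.

(* Stateful morphism sequences.  Indexing convention (0-based shift):    *)
(*   inp k = A_{k+1},  out k = B_{k+1},  lay k = alpha_{k+1},            *)
(*   mem k = M_k  (so mem 0 = M_0 = I).                                 *)

Record sms (C : discard_cat) := Sms {
  inp : nat -> Obj C;
  out : nat -> Obj C;
  mem : nat -> Obj C;
  lay : nat -> Mor C
}.

Arguments Sms {_} _ _ _ _.

Definition wf_sms (C : discard_cat) (a : sms C) : Prop :=
  mem a 0 = unit_obj /\
  forall k, dom (lay a k) = ten (inp a k) (mem a k) /\
            cod (lay a k) = ten (out a k) (mem a (S k)).

Definition regular (C : discard_cat) (a : sms C) : Prop :=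
  exists n, forall k, n <= k ->
    inp a k = inp a n /\ out a k = out a n /\ mem a k = mem a n /\ lay a k = lay a n.

Definition good (C : discard_cat) (a : sms C) : Prop := wf_sms a /\ regular a.

Definition parallel (C : discard_cat) (a b : sms C) : Prop :=
  inp a = inp b /\ out a = out b.

(* composition  b o a  (requires out a = inp b) *)
Definition scomp (C : discard_cat) (b a : sms C) : sms C :=
  Sms (inp a) (out b) (fun k => ten (mem a k) (mem b k))
      (fun k =>
         comp (tenm (idm (out b k)) (sym (mem b (S k)) (mem a (S k))))
        (comp (tenm (lay b k) (idm (mem a (S k))))
        (comp (tenm (idm (out a k)) (sym (mem a (S k)) (mem b k)))
              (tenm (lay a k) (idm (mem b k)))))).

Definition stens (C : discard_cat) (a b : sms C) : sms C :=
  Sms (fun k => ten (inp a k) (inp b k)) (fun k => ten (out a k) (out b k))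
      (fun k => ten (mem a k) (mem b k))
      (fun k =>
         comp (tenm (tenm (idm (out a k)) (sym (mem a (S k)) (out b k))) (idm (mem b (S k))))
        (comp (tenm (lay a k) (lay b k))
              (tenm (tenm (idm (inp a k)) (sym (inp b k) (mem a k))) (idm (mem b k))))).

Definition delay (C : discard_cat) (a : sms C) : sms C :=
  Sms (fun k => match k with 0 => unit_obj | S k' => inp a k' end)
      (fun k => match k with 0 => unit_obj | S k' => out a k' end)
      (fun k => match k with 0 => unit_obj | 1 => unit_obj | S k' => mem a k' end)
      (fun k => match k with 0 => idm unit_obj | S k' => lay a k' end).

Definition upd (T : Type) (f : nat -> T) (j : nat) (x : T) : nat -> T :=
  fun i => if Nat.eqb i j then x else f i.

Definition eqns (C : discard_cat) := sms C -> sms C -> Prop.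

Definition add_eq (C : discard_cat) (G : eqns C) (a b : sms C) : eqns C :=
  fun x y => G x y \/ (x = a /\ y = b).

(* The derivation system of the congruence.  The layer index k >= 1 of
   the paper corresponds to j = k-1 here (layers j and j+1, memory
   mem (j+1) = M_k). *)
Inductive derives (C : discard_cat) : eqns C -> sms C -> sms C -> Prop :=
| d_hyp : forall G a b, G a b -> derives G a b
| d_cm : forall G (a : sms C) j (bk : Mor C) (N M : Obj C) (c g : Mor C),
    dom bk = ten (inp a j) (mem a j) -> cod bk = ten (out a j) N ->
    dom c = N -> cod c = M -> causal c ->
    dom g = ten (inp a (S j)) M -> cod g = ten (out a (S j)) (mem a (S (S j))) ->
    let L := Sms (inp a) (out a) (upd (mem a) (S j) M)
                 (upd (upd (lay a) j (comp (tenm (idm (out a j)) c) bk)) (S j) g) in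
    let R := Sms (inp a) (out a) (upd (mem a) (S j) N)
                 (upd (upd (lay a) j bk) (S j) (comp g (tenm (idm (inp a (S j))) c))) in
    good L -> good R ->
    derives G L R
| d_im : forall G (a : sms C) j (bk : Mor C) (M : Obj C) (p g : Mor C),
    dom bk = ten (inp a j) (mem a j) -> cod bk = ten (out a j) M ->
    dom p = M -> idempotent p ->
    dom g = ten (inp a (S j)) M -> cod g = ten (out a (S j)) (mem a (S (S j))) ->
    mem a (S j) = M ->
    let L := Sms (inp a) (out a) (mem a)
                 (upd (upd (lay a) j (comp (tenm (idm (out a j)) p) bk)) (S j) g) in
    let R := Sms (inp a) (out a) (mem a)
                 (upd (upd (lay a) j (comp (tenm (idm (out a j)) p) bk)) (S j)
                      (comp g (tenm (idm (inp a (S j))) p))) in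
    good L -> good R ->
    derives G L R
| d_refl : forall G a, good a -> derives G a a
| d_sym : forall G a b, derives G a b -> derives G b a
| d_trans : forall G a b c, derives G a b -> derives G b c -> derives G a c
| d_postcomp : forall G a b g, derives G a b -> good g -> out a = inp g ->
    derives G (scomp g a) (scomp g b)
| d_precomp : forall G a b g, derives G a b -> good g -> out g = inp a ->
    derives G (scomp a g) (scomp b g)
| d_tensl : forall G a b g, derives G a b -> good g ->
    derives G (stens g a) (stens g b)
| d_tensr : forall G a b g, derives G a b -> good g ->
    derives G (stens a g) (stens b g)
| d_coind : forall G (a b : nat -> sms C),
    (forall n, good (a n) /\ good (b n) /\ parallel (a n) (b n)) ->
    (forall n, derives (add_eq G (delay (a (S n))) (delay (b (S n)))) (a n) (b n)) ->
    derives G (a 0) (b 0).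

Definition sequiv (C : discard_cat) (a b : sms C) : Prop :=
  derives (fun _ _ => False) a b.

Fixpoint Bprod (C : discard_cat) (a : sms C) (n : nat) : Obj C :=
  match n with
  | 0 => unit_obj
  | S n' => ten (Bprod a n') (out a n')
  end.

(* Phi a j = Phi_{j+1} *)
Fixpoint Phi (C : discard_cat) (a : sms C) (j : nat) : Mor C :=
  match j with
  | 0 => lay a 0
  | S j' =>
      comp (tenm (idm (Bprod a (S j'))) (lay a (S j')))
     (comp (tenm (idm (Bprod a (S j'))) (sym (mem a (S j')) (inp a (S j'))))
           (tenm (Phi a j') (idm (inp a (S j')))))
  end.

(* FA k a = FA_k(a), meaningful for k >= 1 *)
Definition FA (C : discard_cat) (k : nat) (a : sms C) : Mor C :=
  comp (tenm (idm (Bprod a k)) (disc (mem a k))) (Phi a (Nat.pred k)).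

From Stdlib Require Import Arith Lia.

(* We show that the predicate "a and b are regular, parallel, and have the
   same finite approximations FA_1, ..., FA_m" is preserved by every rule of
   the derivation system, for every depth m, as long as the hypotheses of the
   judgment satisfy it.  Since an empty set of hypotheses satisfies it
   vacuously, a ≡ b gives FA_k(a) = FA_k(b) for all k. *)

Fixpoint Pr {C : discard_cat} (X : nat -> Obj C) (n : nat) : Obj C :=
  match n with 0 => unit_obj | S n' => ten (Pr X n') (X n') end.

Lemma Pr_0 {C : discard_cat} (X : nat -> Obj C) : Pr X 0 = unit_obj.
Proof. reflexivity. Qed.

Lemma Pr_S {C : discard_cat} (X : nat -> Obj C) n : Pr X (S n) = ten (Pr X n) (X n).
Proof. reflexivity. Qed.

Lemma Bprod_Pr {C : discard_cat} (a : sms C) n : Bprod a n = Pr (out a) n.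
Proof. induction n; simpl; congruence. Qed.

Lemma mem0 {C : discard_cat} (a : sms C) : wf_sms a -> mem a 0 = unit_obj.
Proof. intros [H _]; exact H. Qed.

Lemma dom_lay {C : discard_cat} (a : sms C) k :
  wf_sms a -> dom (lay a k) = ten (inp a k) (mem a k).
Proof. intros [_ H]; apply H. Qed.

Lemma cod_lay {C : discard_cat} (a : sms C) k :
  wf_sms a -> cod (lay a k) = ten (out a k) (mem a (S k)).
Proof. intros [_ H]; apply H. Qed.

Lemma comp_idl' {C : discard_cat} (f : Mor C) X : cod f = X -> comp (idm X) f = f.
Proof. intros <-; apply comp_idl. Qed.

Lemma comp_idr' {C : discard_cat} (f : Mor C) X : dom f = X -> comp f (idm X) = f.
Proof. intros <-; apply comp_idr. Qed.

Lemma comp_idid {C : discard_cat} (A : Obj C) : comp (idm A) (idm A) = idm A.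
Proof. apply comp_idl', cod_idm. Qed.

Lemma tenm_idm2 {C : discard_cat} (X Y : Obj C) f :
  tenm (idm X) (tenm (idm Y) f) = tenm (idm (ten X Y)) f.
Proof. rewrite <- tenm_assoc, tenm_idm. reflexivity. Qed.

Lemma tenm_comp_idl {C : discard_cat} (A : Obj C) x y :
  cod y = dom x -> tenm (idm A) (comp x y) = comp (tenm (idm A) x) (tenm (idm A) y).
Proof.
  intros H. rewrite <- tenm_comp by (rewrite ?cod_idm, ?dom_idm; auto).
  rewrite comp_idid. reflexivity.
Qed.

Lemma tenm_comp_idr {C : discard_cat} (A : Obj C) x y :
  cod y = dom x -> tenm (comp x y) (idm A) = comp (tenm x (idm A)) (tenm y (idm A)).
Proof.
  intros H. rewrite <- tenm_comp by (rewrite ?cod_idm, ?dom_idm; auto).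
  rewrite comp_idid. reflexivity.
Qed.

Lemma tenm_split {C : discard_cat} (f g : Mor C) :
  tenm f g = comp (tenm f (idm (cod g))) (tenm (idm (dom f)) g).
Proof.
  rewrite <- tenm_comp by (rewrite ?cod_idm, ?dom_idm; auto).
  rewrite comp_idl, comp_idr. reflexivity.
Qed.

Lemma tenm_split2 {C : discard_cat} (f g : Mor C) :
  tenm f g = comp (tenm (idm (cod f)) g) (tenm f (idm (dom g))).
Proof.
  rewrite <- tenm_comp by (rewrite ?cod_idm, ?dom_idm; auto).
  rewrite comp_idl, comp_idr. reflexivity.
Qed.

Lemma sym_unit_l {C : discard_cat} (A : Obj C) : sym unit_obj A = idm A.
Proof.
  pose proof (sym_inv C unit_obj A) as H.
  rewrite sym_unit, ten_unitl in H.
  pose proof (comp_idl C (sym unit_obj A)) as H2.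
  rewrite cod_sym, ten_unitr in H2. congruence.
Qed.

(* Automation.  [dc] discharges the typing side conditions [dom f = X] and
   [cod f = Y] that accompany every use of associativity or functoriality of
   ⊗, using the typing axioms, the typing hypotheses in the context, and the
   database [domcod] of typings of the named morphisms (layers, Phi, shuffles),
   which is extended as these are introduced.  [mn] brings a morphism to a
   normal form: composites and tensors associated to the right, identities and
   trivial symmetries removed, identity whiskerings distributed over
   composites. *)
Create HintDb domcod.
Hint Rewrite @dom_lay @cod_lay using assumption : domcod.

Create HintDb objnf.
Hint Rewrite ten_assoc ten_unitl ten_unitr @Pr_S @Pr_0 @Bprod_Pr : objnf.

Create HintDb mnf.
Hint Rewrite tenm_assoc @tenm_idm2 tenm_idm tenm_unitl tenm_unitr @sym_unit @sym_unit_l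
  disc_unit ten_assoc ten_unitl ten_unitr @Pr_S @Pr_0 @Bprod_Pr : mnf.

Ltac use_context_eqs :=
  repeat match goal with
         | H : wf_sms ?a |- context [mem ?a 0] => rewrite (mem0 a H)
         | H : inp ?g = out ?a |- context [inp ?g] => rewrite H
         end.

Ltac objn := use_context_eqs; cbv beta; simpl; autorewrite with objnf.

Ltac dcstep dc :=
  first
  [ rewrite dom_idm | rewrite cod_idm | rewrite dom_tenm | rewrite cod_tenm
  | rewrite dom_sym | rewrite cod_sym | rewrite dom_disc | rewrite cod_disc
  | progress autorewrite with domcod
  | match goal with
    | H : dom ?f = _ |- context [dom ?f] => rewrite H
    | H : cod ?f = _ |- context [cod ?f] => rewrite H
    end
  | rewrite dom_comp by dc
  | rewrite cod_comp by dc ].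

Ltac dc := repeat (dcstep dc); objn; reflexivity.

Ltac cnorm :=
  repeat first [ rewrite <- comp_assoc by dc
               | rewrite comp_idl' by dc
               | rewrite comp_idr' by dc
               | rewrite tenm_comp_idl by dc
               | rewrite tenm_comp_idr by dc ].

Ltac mn :=
  repeat progress (
    use_context_eqs;
    repeat (dcstep dc);
    autorewrite with mnf; cbv beta; cnorm).

Ltac peelL := repeat match goal with |- comp ?x ?r1 = comp ?x ?r2 => apply (f_equal (comp x)) end.
Ltac peelR := repeat match goal with |- comp ?l1 ?x = comp ?l2 ?x => apply (f_equal (fun l => comp l x)) end.
Ltac cnormL := repeat rewrite comp_assoc by dc.

Lemma chain {C : discard_cat} (x y w r : Mor C) :
  comp x y = w -> cod r = dom y -> cod y = dom x -> comp x (comp y r) = comp w r.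
Proof. intros <- H1 H2. apply comp_assoc; auto. Qed.

Lemma chain2 {C : discard_cat} (x y x' y' r : Mor C) :
  comp x y = comp x' y' -> cod r = dom y -> cod y = dom x -> cod r = dom y' -> cod y' = dom x' ->
  comp x (comp y r) = comp x' (comp y' r).
Proof. intros E H1 H2 H3 H4. rewrite !comp_assoc by auto. rewrite E. reflexivity. Qed.

Ltac crw E := first [ rewrite (chain2 _ _ _ _ _ E) by dc
                    | rewrite (chain _ _ _ _ E) by dc | rewrite E ].

Lemma interchange {C : discard_cat} (f g : Mor C) :
  comp (tenm f (idm (cod g))) (tenm (idm (dom f)) g) =
  comp (tenm (idm (cod f)) g) (tenm f (idm (dom g))).
Proof. rewrite <- tenm_split, <- tenm_split2. reflexivity. Qed.

Lemma slide_down {C : discard_cat} (f h r : Mor C) W X Y' :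
  X = ten (dom f) W -> Y' = ten W (cod h) -> cod r = ten X (dom h) ->
  comp (tenm f (idm Y')) (comp (tenm (idm X) h) r) =
  comp (tenm (idm (ten (cod f) W)) h) (comp (tenm f (idm (ten W (dom h)))) r).
Proof.
  intros -> -> Hr. rewrite <- !tenm_idm2.
  pose proof (interchange f (tenm (idm W) h)) as E. revert E; mn; intro E.
  rewrite (chain _ _ _ _ E) by dc. rewrite comp_assoc by dc. reflexivity.
Qed.

Lemma slide_down_end {C : discard_cat} (f h : Mor C) W X Y' :
  X = ten (dom f) W -> Y' = ten W (cod h) ->
  comp (tenm f (idm Y')) (tenm (idm X) h) =
  comp (tenm (idm (ten (cod f) W)) h) (tenm f (idm (ten W (dom h)))).
Proof.
  intros -> ->. pose proof (interchange f (tenm (idm W) h)) as E.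
  revert E; mn; intro E. exact E.
Qed.

Lemma slide_up {C : discard_cat} (f h r : Mor C) W X Y :
  X = ten (cod f) W -> Y = ten W (dom h) -> cod r = ten (dom f) Y ->
  comp (tenm (idm X) h) (comp (tenm f (idm Y)) r) =
  comp (tenm f (idm (ten W (cod h)))) (comp (tenm (idm (ten (dom f) W)) h) r).
Proof.
  intros -> -> Hr. pose proof (interchange f (tenm (idm W) h)) as E.
  revert E; mn; intro E.
  rewrite (chain _ _ _ _ (eq_sym E)) by dc. rewrite comp_assoc by dc. reflexivity.
Qed.


Ltac sldW f W := first [rewrite (slide_down f _ _ W) by dc | rewrite (slide_down_end f _ W) by dc]; mn.
Ltac sluW f W := rewrite (slide_up f _ _ W) by dc; mn.
Ltac unit_of f := match type of f with Mor ?C => constr:(@unit_obj C) end.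
Ltac sld f := first
  [ sldW f ltac:(unit_of f)
  | match goal with |- context [comp (tenm f (idm _)) (comp (tenm (idm (ten _ ?W)) _) _)] => sldW f W end ].
Ltac slu f := first
  [ sluW f ltac:(unit_of f)
  | match goal with |- context [comp (tenm (idm (ten _ ?W)) _) (comp (tenm f (idm _)) _)] => sluW f W end ].
Ltac wk E X W :=
  let H := fresh "E" in
  pose proof E as H;
  apply (f_equal (fun x => tenm (idm X) (tenm x (idm W)))) in H;
  revert H; mn; intro H; crw H; mn; clear H.

Lemma inv_unique {C : discard_cat} (s r t : Mor C) :
  dom s = cod r -> cod s = dom r -> dom t = cod s -> cod t = dom s ->
  comp s r = idm (dom r) -> comp t s = idm (dom s) -> t = r.
Proof.
  intros H1 H2 H3 H4 E1 E2.
  transitivity (comp t (comp s r)).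
  - rewrite E1, <- H2, <- H3. symmetry. apply comp_idr.
  - rewrite comp_assoc by congruence. rewrite E2, H1. apply comp_idl.
Qed.

(* The second hexagon, derived from the first one and involutivity. *)
Lemma sym_hex2 {C : discard_cat} (X Y Z : Obj C) :
  sym (ten X Y) Z = comp (tenm (sym X Z) (idm Y)) (tenm (idm X) (sym Y Z)).
Proof.
  apply (inv_unique (sym Z (ten X Y))); try dc.
  - rewrite sym_hex. mn.
    rewrite (comp_assoc _ _ (tenm (sym X Z) (idm Y)) (tenm (sym Z X) (idm Y))) by dc.
    rewrite <- tenm_comp by dc. rewrite sym_inv. mn.
    rewrite <- tenm_comp by dc. rewrite sym_inv. mn. reflexivity.
  - rewrite sym_inv. f_equal; dc.
Qed.

Lemma sym_nat_l {C : discard_cat} (X Y : Obj C) g : cod g = Y ->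
  comp (sym X Y) (tenm (idm X) g) = comp (tenm g (idm X)) (sym X (dom g)).
Proof. intros <-. pose proof (sym_nat C (idm X) g) as H. rewrite cod_idm, dom_idm in H. exact H. Qed.

Lemma sym_nat_r {C : discard_cat} (X Y : Obj C) f : cod f = X ->
  comp (sym X Y) (tenm f (idm Y)) = comp (tenm (idm Y) f) (sym (dom f) Y).
Proof. intros <-. pose proof (sym_nat C f (idm Y)) as H. rewrite cod_idm, dom_idm in H. exact H. Qed.

Lemma sym_tenm_idr {C : discard_cat} (X Y Z : Obj C) :
  tenm (sym X Y) (idm Z) = comp (tenm (idm Y) (sym Z X)) (sym X (ten Y Z)).
Proof.
  rewrite sym_hex. mn.
  rewrite (comp_assoc _ _ (tenm (idm Y) (sym X Z)) (tenm (idm Y) (sym Z X))) by dc.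
  rewrite <- tenm_comp by dc. rewrite sym_inv. mn. reflexivity.
Qed.

Lemma yang_baxter {C : discard_cat} (X Y Z : Obj C) :
  comp (sym (ten Y X) Z) (tenm (sym X Y) (idm Z)) =
  comp (sym X (ten Z Y)) (tenm (idm X) (sym Y Z)).
Proof.
  rewrite sym_nat_l by dc. rewrite dom_sym, sym_hex, sym_hex2. mn. reflexivity.
Qed.

Lemma disc_sym {C : discard_cat} (X Y : Obj C) :
  comp (tenm (disc X) (disc Y)) (sym Y X) = tenm (disc Y) (disc X).
Proof.
  pose proof (sym_nat C (disc Y) (disc X)) as H. rewrite !cod_disc, !dom_disc, sym_unit in H.
  rewrite <- H. apply comp_idl'. dc.
Qed.

Lemma Phi_S {C : discard_cat} (a : sms C) j : Phi a (S j) =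
  comp (tenm (idm (Bprod a (S j))) (lay a (S j)))
     (comp (tenm (idm (Bprod a (S j))) (sym (mem a (S j)) (inp a (S j))))
           (tenm (Phi a j) (idm (inp a (S j))))).
Proof. reflexivity. Qed.

Lemma Phi_typing {C : discard_cat} (a : sms C) j : wf_sms a ->
  dom (Phi a j) = Pr (inp a) (S j) /\ cod (Phi a j) = ten (Pr (out a) (S j)) (mem a (S j)).
Proof.
  intros W. induction j as [|j [H1 H2]]; simpl Phi; split; dc.
Qed.

Lemma dom_Phi {C : discard_cat} (a : sms C) j : wf_sms a -> dom (Phi a j) = Pr (inp a) (S j).
Proof. intros W; apply (Phi_typing a j W). Qed.

Lemma cod_Phi {C : discard_cat} (a : sms C) j :
  wf_sms a -> cod (Phi a j) = ten (Pr (out a) (S j)) (mem a (S j)).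
Proof. intros W; apply (Phi_typing a j W). Qed.

Hint Rewrite @dom_Phi @cod_Phi using assumption : domcod.

Lemma Bprod_out {C : discard_cat} (x y : sms C) n : out x = out y -> Bprod x n = Bprod y n.
Proof. intros H. rewrite !Bprod_Pr, H. reflexivity. Qed.

Lemma Phi_step_ext {C : discard_cat} (x y : sms C) i :
  Phi x i = Phi y i -> lay x (S i) = lay y (S i) -> mem x (S i) = mem y (S i) ->
  inp x = inp y -> out x = out y -> Phi x (S i) = Phi y (S i).
Proof.
  intros H1 H2 H3 H4 H5. rewrite !Phi_S, H1, H2, H3, H4, (Bprod_out x y (S i) H5). reflexivity.
Qed.

Lemma Phi_ext {C : discard_cat} (x y : sms C) i :
  inp x = inp y -> out x = out y -> (forall t, t <= i -> lay x t = lay y t) ->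
  (forall t, t <= i -> mem x t = mem y t) -> Phi x i = Phi y i.
Proof.
  intros Hi Ho Hl Hm. induction i.
  - apply Hl; lia.
  - apply Phi_step_ext; auto.
Qed.

(* Sequential composition.  The key coherence step: moving the memory wire
   of g past one layer of a. *)
Lemma scomp_coherence {C : discard_cat} (al : Mor C) A Ma B Ma' Mg :
  dom al = ten A Ma -> cod al = ten B Ma' ->
  comp (tenm (idm B) (sym Ma' Mg))
    (comp (tenm al (idm Mg)) (comp (sym (ten Ma Mg) A) (tenm (sym Mg Ma) (idm A))))
  = comp (tenm (sym Mg B) (idm Ma')) (comp (tenm (idm Mg) al) (tenm (idm Mg) (sym Ma A))).
Proof.
  intros Hd Hc.
  crw (yang_baxter Mg Ma A).
  rewrite sym_tenm_idr. mn.
  crw (sym_nat_l Mg (ten B Ma') al Hc). rewrite Hd. reflexivity.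
Qed.

Lemma out_scomp {C : discard_cat} (g a : sms C) : out (scomp g a) = out g. Proof. reflexivity. Qed.
Lemma inp_scomp {C : discard_cat} (g a : sms C) : inp (scomp g a) = inp a. Proof. reflexivity. Qed.
Hint Rewrite @out_scomp @inp_scomp : mnf objnf.

Lemma Phi_scomp {C : discard_cat} (g a : sms C) j :
  wf_sms a -> wf_sms g -> inp g = out a ->
  Phi (scomp g a) j =
  comp (tenm (idm (Pr (out g) (S j))) (sym (mem g (S j)) (mem a (S j))))
       (comp (tenm (Phi g j) (idm (mem a (S j)))) (Phi a j)).
Proof.
  intros Wa Wg Hio. induction j as [|j IHj].
  - simpl. mn. reflexivity.
  - simpl Phi at 1. rewrite IHj. simpl. mn.
    rewrite (slide_down (Phi g j) (lay a (S j)) _ unit_obj) by dc.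
    rewrite (slide_down (Phi g j) (sym _ _) _ unit_obj) by dc.
    mn.
    pose proof (scomp_coherence (lay a (S j)) (inp a (S j)) (mem a (S j)) (out a (S j))
                  (mem a (S (S j))) (mem g (S j)) ltac:(dc) ltac:(dc)) as K.
    apply (f_equal (tenm (idm (ten (Pr (out g) j) (out g j))))) in K.
    revert K; mn; intro K.
    peelL. cnormL. peelR. cnorm.
    exact K.
Qed.

Lemma disc_sym_whisker {C : discard_cat} (P X Y : Obj C) :
  comp (tenm (idm P) (tenm (disc X) (disc Y))) (tenm (idm P) (sym Y X)) =
  tenm (idm P) (tenm (disc Y) (disc X)).
Proof. rewrite <- tenm_comp_idl by dc. rewrite disc_sym. reflexivity. Qed.

Lemma disc_tenm_after {C : discard_cat} (P Pa X Y : Obj C) F :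
  dom F = Pa -> cod F = ten P Y ->
  comp (tenm (idm P) (tenm (disc Y) (disc X))) (tenm F (idm X)) =
  comp (tenm (idm P) (disc Y)) (comp F (tenm (idm Pa) (disc X))).
Proof.
  intros Hd Hc. rewrite <- tenm_assoc, <- tenm_comp by dc.
  rewrite comp_idr' by dc. rewrite tenm_split. mn. reflexivity.
Qed.

Lemma FA_scomp {C : discard_cat} (g a : sms C) k :
  wf_sms a -> wf_sms g -> inp g = out a -> 1 <= k ->
  FA k (scomp g a) = comp (FA k g) (FA k a).
Proof.
  intros Wa Wg Hio Hk. destruct k as [|j]; [lia|]. unfold FA. simpl Nat.pred.
  rewrite Phi_scomp by auto. simpl mem. rewrite disc_ten. mn.
  crw (disc_sym_whisker (ten (Pr (out g) j) (out g j)) (mem a (S j)) (mem g (S j))).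
  crw (disc_tenm_after (ten (Pr (out g) j) (out g j)) (ten (Pr (out a) j) (out a j))
         (mem a (S j)) (mem g (S j)) (Phi g j) ltac:(dc) ltac:(dc)).
  mn. reflexivity.
Qed.

Fixpoint shuffle {C : discard_cat} (X Y : nat -> Obj C) (n : nat) : Mor C :=
  match n with
  | 0 => idm unit_obj
  | S n' => comp (tenm (shuffle X Y n') (idm (ten (X n') (Y n'))))
                 (tenm (idm (Pr X n')) (tenm (sym (X n') (Pr Y n')) (idm (Y n'))))
  end.

Fixpoint unshuffle {C : discard_cat} (X Y : nat -> Obj C) (n : nat) : Mor C :=
  match n with
  | 0 => idm unit_obj
  | S n' => comp (tenm (idm (Pr X n')) (tenm (sym (Pr Y n') (X n')) (idm (Y n'))))
                 (tenm (unshuffle X Y n') (idm (ten (X n') (Y n'))))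
  end.

Lemma shuffle_typing {C : discard_cat} (X Y : nat -> Obj C) n :
  dom (shuffle X Y n) = ten (Pr X n) (Pr Y n) /\
  cod (shuffle X Y n) = Pr (fun k => ten (X k) (Y k)) n.
Proof. induction n as [|n [H1 H2]]; simpl shuffle; split; dc. Qed.

Lemma unshuffle_typing {C : discard_cat} (X Y : nat -> Obj C) n :
  dom (unshuffle X Y n) = Pr (fun k => ten (X k) (Y k)) n /\
  cod (unshuffle X Y n) = ten (Pr X n) (Pr Y n).
Proof. induction n as [|n [H1 H2]]; simpl unshuffle; split; dc. Qed.

Lemma dom_shuffle {C : discard_cat} (X Y : nat -> Obj C) n :
  dom (shuffle X Y n) = ten (Pr X n) (Pr Y n).
Proof. apply shuffle_typing. Qed.
Lemma cod_shuffle {C : discard_cat} (X Y : nat -> Obj C) n :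
  cod (shuffle X Y n) = Pr (fun k => ten (X k) (Y k)) n.
Proof. apply shuffle_typing. Qed.
Lemma dom_unshuffle {C : discard_cat} (X Y : nat -> Obj C) n :
  dom (unshuffle X Y n) = Pr (fun k => ten (X k) (Y k)) n.
Proof. apply unshuffle_typing. Qed.
Lemma cod_unshuffle {C : discard_cat} (X Y : nat -> Obj C) n :
  cod (unshuffle X Y n) = ten (Pr X n) (Pr Y n).
Proof. apply unshuffle_typing. Qed.
Hint Rewrite @dom_shuffle @cod_shuffle @dom_unshuffle @cod_unshuffle : domcod.

Lemma out_stens {C : discard_cat} (a g : sms C) : out (stens a g) = fun k => ten (out a k) (out g k).
Proof. reflexivity. Qed.
Lemma inp_stens {C : discard_cat} (a g : sms C) : inp (stens a g) = fun k => ten (inp a k) (inp g k).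
Proof. reflexivity. Qed.
Hint Rewrite @out_stens @inp_stens : mnf objnf.

(* The wire rearrangement in one step of Phi (a ⊗ g): after Phi a ⊗ Phi g,
   running the layers al, ga of a and g side by side equals running them
   one after the other as in Phi a and Phi g separately.  This lemma is the
   core, with the approximation Fa of a already slid out of the way. *)
Lemma stens_step_core {C : discard_cat} (PA' Pg A A' B B' Ma Mg Ma' Mg' : Obj C) (Fg al ga : Mor C) :
  dom Fg = PA' -> cod Fg = ten Pg Mg ->
  dom al = ten A Ma -> cod al = ten B Ma' -> dom ga = ten A' Mg -> cod ga = ten B' Mg' ->
  comp (tenm (idm (ten Pg B)) (tenm (sym Ma' B') (idm Mg')))
  (comp (tenm (idm Pg) (tenm al ga))
  (comp (tenm (idm (ten Pg A)) (tenm (sym A' Ma) (idm Mg)))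
  (comp (tenm (idm Pg) (sym (ten Ma Mg) (ten A A')))
  (comp (tenm (sym Ma Pg) (idm (ten Mg (ten A A'))))
        (tenm (idm Ma) (tenm Fg (idm (ten A A'))))))))
  = comp (tenm (sym B Pg) (idm (ten B' (ten Ma' Mg'))))
    (comp (tenm (idm B) (tenm (sym Ma' (ten Pg B')) (idm Mg')))
    (comp (tenm al (idm (ten Pg (ten B' Mg'))))
    (comp (tenm (sym Ma A) (idm (ten Pg (ten B' Mg'))))
    (comp (tenm (idm (ten Ma (ten A Pg))) ga)
    (comp (tenm (idm (ten Ma (ten A Pg))) (sym Mg A'))
    (comp (tenm (idm (ten Ma A)) (tenm Fg (idm A')))
          (tenm (idm Ma) (tenm (sym PA' A) (idm A'))))))))).
Proof.
  intros HFd HFc Had Hac Hgd Hgc.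
  assert (Hnat : comp (tenm (idm (ten Ma A)) (tenm Fg (idm A')))
                      (tenm (idm Ma) (tenm (sym (dom Fg) A) (idm A'))) =
                 comp (tenm (idm Ma) (tenm (sym (cod Fg) A) (idm A')))
                      (tenm (idm Ma) (tenm Fg (idm (ten A A'))))).
  { pose proof (sym_nat_r (cod Fg) A Fg eq_refl) as E.
    apply (f_equal (fun x => tenm (idm Ma) (tenm x (idm A')))) in E. revert E; mn; intro E.
    rewrite E. reflexivity. }
  revert Hnat; mn; intro Hnat. crw Hnat. mn. clear Hnat.
  cnormL. peelR. cnorm.
  rewrite (sym_hex _ Ma' Pg B'). mn.
  sldW (sym B Pg) (@unit_obj C). peelL.
  pose proof (sym_hex2 B Ma' Pg) as E.
  apply (f_equal (fun x => tenm x (idm (ten B' Mg')))) in E. revert E; mn; intro E.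
  crw (eq_sym E). mn. clear E.
  pose proof (sym_nat_r (ten B Ma') Pg al Hac) as E.
  apply (f_equal (fun x => tenm x (idm (ten B' Mg')))) in E. revert E; mn; intro E.
  crw E. mn. clear E.
  rewrite (tenm_split al ga). mn. peelL.
  sldW (sym Ma A) Pg.
  sldW (sym (ten A Ma) Pg) (@unit_obj C). peelL.
  rewrite (sym_hex2 Ma Mg (ten A A')), (sym_hex _ Ma A A'), (sym_hex _ Mg A A'). mn.
  wk (sym_inv _ Ma A') (ten Pg A) Mg.
  wk (yang_baxter Ma A Pg) (@unit_obj C) (ten A' Mg).
  rewrite <- (tenm_assoc _ (idm Ma) (sym A Pg)). sldW (tenm (idm Ma) (sym A Pg)) (@unit_obj C).
  rewrite (sym_hex2 Pg Mg A). mn.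
  wk (sym_inv _ Pg A) Ma (ten Mg A').
  rewrite (sym_hex _ Ma Pg A). mn.
  sldW (sym Ma Pg) A. sldW (sym Ma Pg) (@unit_obj C). reflexivity.
Qed.

(* One step of Phi (a ⊗ g), in terms of one step of Phi a and of Phi g;
   u and s stand for the shuffle isomorphisms on outputs and inputs. *)
Lemma stens_step {C : discard_cat} (PA PA' PAA Pa Pg PXY A A' B B' Ma Mg Ma' Mg' : Obj C)
  (Fa Fg u s al ga : Mor C) :
  dom Fa = PA -> cod Fa = ten Pa Ma -> dom Fg = PA' -> cod Fg = ten Pg Mg ->
  dom u = ten Pa Pg -> cod u = PXY -> dom s = PAA -> cod s = ten PA PA' ->
  dom al = ten A Ma -> cod al = ten B Ma' -> dom ga = ten A' Mg -> cod ga = ten B' Mg' ->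
  comp (tenm (idm PXY)
          (comp (tenm (tenm (idm B) (sym Ma' B')) (idm Mg'))
             (comp (tenm al ga) (tenm (tenm (idm A) (sym A' Ma)) (idm Mg)))))
   (comp (tenm (idm PXY) (sym (ten Ma Mg) (ten A A')))
      (tenm (comp (tenm u (idm (ten Ma Mg)))
              (comp (tenm (idm Pa) (tenm (sym Ma Pg) (idm Mg))) (comp (tenm Fa Fg) s)))
            (idm (ten A A'))))
  =
  comp (tenm (comp (tenm u (idm (ten B B'))) (tenm (idm Pa) (tenm (sym B Pg) (idm B'))))
             (idm (ten Ma' Mg')))
   (comp (tenm (idm (ten Pa B)) (tenm (sym Ma' (ten Pg B')) (idm Mg')))
      (comp (tenm (comp (tenm (idm Pa) al) (comp (tenm (idm Pa) (sym Ma A)) (tenm Fa (idm A))))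
                  (comp (tenm (idm Pg) ga) (comp (tenm (idm Pg) (sym Mg A')) (tenm Fg (idm A')))))
         (comp (tenm (idm PA) (tenm (sym PA' A) (idm A'))) (tenm s (idm (ten A A')))))).
Proof.
  intros.
  rewrite (tenm_split (comp (tenm (idm Pa) al) _)). mn.
  do 4 slu u. peelL.
  do 4 sld Fa.
  rewrite (tenm_split2 Fa). mn.
  cnormL. peelR. cnorm.
  pose proof (stens_step_core PA' Pg A A' B B' Ma Mg Ma' Mg' Fg al ga) as E.
  apply (f_equal (tenm (idm Pa))) in E; [|auto..]. revert E; mn; intro E. exact E.
Qed.

Lemma Phi_stens {C : discard_cat} (a g : sms C) j :
  wf_sms a -> wf_sms g ->
  Phi (stens a g) j =
  comp (tenm (shuffle (out a) (out g) (S j)) (idm (ten (mem a (S j)) (mem g (S j)))))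
   (comp (tenm (idm (Pr (out a) (S j)))
               (tenm (sym (mem a (S j)) (Pr (out g) (S j))) (idm (mem g (S j)))))
     (comp (tenm (Phi a j) (Phi g j)) (unshuffle (inp a) (inp g) (S j)))).
Proof.
  intros Wa Wg. induction j as [|j IHj].
  - simpl. mn. reflexivity.
  - rewrite Phi_S, IHj, (Phi_S a j), (Phi_S g j).
    change (shuffle ?X ?Y (S (S j))) with
      (comp (tenm (shuffle X Y (S j)) (idm (ten (X (S j)) (Y (S j)))))
            (tenm (idm (Pr X (S j))) (tenm (sym (X (S j)) (Pr Y (S j))) (idm (Y (S j)))))).
    change (unshuffle ?X ?Y (S (S j))) with
      (comp (tenm (idm (Pr X (S j))) (tenm (sym (Pr Y (S j)) (X (S j))) (idm (Y (S j)))))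
            (tenm (unshuffle X Y (S j)) (idm (ten (X (S j)) (Y (S j)))))).
    pose proof (stens_step (Pr (inp a) (S j)) (Pr (inp g) (S j))
       (Pr (fun k => ten (inp a k) (inp g k)) (S j))
       (Pr (out a) (S j)) (Pr (out g) (S j)) (Pr (fun k => ten (out a k) (out g k)) (S j))
       (inp a (S j)) (inp g (S j)) (out a (S j)) (out g (S j)) (mem a (S j)) (mem g (S j))
       (mem a (S (S j))) (mem g (S (S j)))
       (Phi a j) (Phi g j) (shuffle (out a) (out g) (S j)) (unshuffle (inp a) (inp g) (S j))
       (lay a (S j)) (lay g (S j))
       ltac:(dc) ltac:(dc) ltac:(dc) ltac:(dc) ltac:(dc) ltac:(dc) ltac:(dc) ltac:(dc)
       ltac:(dc) ltac:(dc) ltac:(dc) ltac:(dc)) as K.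
    simpl lay. simpl mem. simpl inp. revert K. mn. intro K. exact K.
Qed.

Lemma FA_stens {C : discard_cat} (a g : sms C) k :
  wf_sms a -> wf_sms g -> 1 <= k ->
  FA k (stens a g) =
  comp (shuffle (out a) (out g) k) (comp (tenm (FA k a) (FA k g)) (unshuffle (inp a) (inp g) k)).
Proof.
  intros Wa Wg Hk. destruct k as [|j]; [lia|]. unfold FA. simpl Nat.pred.
  rewrite Phi_stens by auto. simpl mem. rewrite disc_ten, tenm_comp by dc.
  mn.
  sluW (shuffle (out a) (out g) (S j)) (@unit_obj C).
  assert (Hdisc : forall P M N : Obj C,
            comp (tenm (tenm (idm P) (disc M)) (disc N)) (tenm (sym M P) (idm N)) =
            tenm (tenm (disc M) (idm P)) (disc N)).
  { intros P M N. rewrite <- tenm_comp by dc. rewrite comp_idr' by dc.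
    pose proof (sym_nat_r unit_obj P (disc M) (cod_disc _ M)) as E.
    rewrite sym_unit_l, dom_disc in E. rewrite comp_idl' in E by dc. rewrite <- E. reflexivity. }
  pose proof (Hdisc (ten (Pr (out g) j) (out g j)) (mem a (S j)) (mem g (S j))) as E.
  apply (f_equal (tenm (idm (ten (Pr (out a) j) (out a j))))) in E. revert E; mn; intro E.
  crw E. mn. reflexivity.
Qed.

Lemma Bprod_delay {C : discard_cat} (a : sms C) n : Bprod (delay a) (S n) = Bprod a n.
Proof.
  induction n as [|n IHn].
  - apply ten_unitl.
  - change (Bprod (delay a) (S (S n))) with (ten (Bprod (delay a) (S n)) (out a n)).
    rewrite IHn. reflexivity.
Qed.

Lemma Phi_delay {C : discard_cat} (a : sms C) j : wf_sms a -> Phi (delay a) (S j) = Phi a j.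
Proof.
  intros Wa. induction j as [|j IHj]; rewrite Phi_S, Bprod_delay.
  - simpl. mn. reflexivity.
  - rewrite IHj. reflexivity.
Qed.

Lemma FA_delay {C : discard_cat} (a : sms C) k : wf_sms a -> 1 <= k -> FA (S k) (delay a) = FA k a.
Proof.
  intros Wa Hk. destruct k as [|k]; [lia|]. unfold FA. simpl Nat.pred.
  rewrite Phi_delay, Bprod_delay by auto. reflexivity.
Qed.

Lemma FA1_delay {C : discard_cat} (a b : sms C) : FA 1 (delay a) = FA 1 (delay b).
Proof. reflexivity. Qed.

Lemma upd_eq {T : Type} (f : nat -> T) j x : upd f j x j = x.
Proof. unfold upd. rewrite Nat.eqb_refl. reflexivity. Qed.

Lemma upd_neq {T : Type} (f : nat -> T) j x i : i <> j -> upd f j x i = f i.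
Proof. intros H. unfold upd. apply Nat.eqb_neq in H. rewrite H. reflexivity. Qed.

Hint Rewrite @upd_eq : objnf mnf.
Hint Rewrite @upd_neq using lia : objnf mnf.

(* The two sides of rule (CM) at layers j, j+1: the causal c is applied
   at the end of layer j (memory M) or at the start of layer j+1 (memory N). *)
Definition cm_lhs {C : discard_cat} (a : sms C) j (M : Obj C) (bk c g : Mor C) : sms C :=
  Sms (inp a) (out a) (upd (mem a) (S j) M)
      (upd (upd (lay a) j (comp (tenm (idm (out a j)) c) bk)) (S j) g).

Definition cm_rhs {C : discard_cat} (a : sms C) j (N : Obj C) (bk c g : Mor C) : sms C :=
  Sms (inp a) (out a) (upd (mem a) (S j) N)
      (upd (upd (lay a) j bk) (S j) (comp g (tenm (idm (inp a (S j))) c))).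

(* The two sides of rule (IM): the idempotent p is repeated at the start of
   layer j+1 or not. *)
Definition im_lhs {C : discard_cat} (a : sms C) j (bk p g : Mor C) : sms C :=
  Sms (inp a) (out a) (mem a)
      (upd (upd (lay a) j (comp (tenm (idm (out a j)) p) bk)) (S j) g).

Definition im_rhs {C : discard_cat} (a : sms C) j (bk p g : Mor C) : sms C :=
  Sms (inp a) (out a) (mem a)
      (upd (upd (lay a) j (comp (tenm (idm (out a j)) p) bk)) (S j)
           (comp g (tenm (idm (inp a (S j))) p))).

Ltac updsimpl :=
  cbn [lay mem inp out cm_lhs cm_rhs im_lhs im_rhs];
  repeat match goal with
         | |- context [upd ?f ?j ?x ?j] => rewrite (upd_eq f j x)
         | |- context [upd ?f ?j ?x ?i] => rewrite (upd_neq f j x i) by lia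
         end.

Lemma Phi_agree_after {C : discard_cat} (x y : sms C) j :
  inp x = inp y -> out x = out y -> Phi x (S j) = Phi y (S j) ->
  (forall t, S j < t -> lay x t = lay y t /\ mem x t = mem y t) ->
  forall i, S j <= i -> Phi x i = Phi y i.
Proof.
  intros Hi Ho HSj Hlm i Hle. induction Hle as [|i Hle IH]; auto.
  destruct (Hlm (S i)) as [Hl Hm]; [lia|]. apply Phi_step_ext; auto.
Qed.

(* Rule (CM) is sound: c can be moved across the memory wire because the
   symmetry is natural, and it disappears under discarding because it is
   causal. *)
Lemma FA_cm {C : discard_cat} (a : sms C) j (bk : Mor C) (N M : Obj C) (c g : Mor C) :
  dom bk = ten (inp a j) (mem a j) -> cod bk = ten (out a j) N ->
  dom c = N -> cod c = M -> causal c ->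
  dom g = ten (inp a (S j)) M -> cod g = ten (out a (S j)) (mem a (S (S j))) ->
  wf_sms (cm_lhs a j M bk c g) -> wf_sms (cm_rhs a j N bk c g) ->
  forall k, 1 <= k -> FA k (cm_lhs a j M bk c g) = FA k (cm_rhs a j N bk c g).
Proof.
  intros Hbd Hbc Hcd Hcc Hca Hgd Hgc WL WR.
  set (L := cm_lhs a j M bk c g) in *. set (R := cm_rhs a j N bk c g) in *.
  assert (BL : forall n, Bprod L n = Bprod a n) by (intros; apply Bprod_out; reflexivity).
  assert (BR : forall n, Bprod R n = Bprod a n) by (intros; apply Bprod_out; reflexivity).
  assert (Hlt : forall i, i < j -> Phi L i = Phi R i).
  { intros i Hi. apply Phi_ext; auto; intros t Ht; subst L R; updsimpl; reflexivity. }
  (* at index j, L has additionally applied c to the memory *)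
  assert (Hj : Phi L j = comp (tenm (idm (Bprod a (S j))) c) (Phi R j)).
  { destruct j as [|j'].
    - subst L R. simpl. mn. reflexivity.
    - rewrite !Phi_S, BL, BR, (Hlt j') by lia.
      subst L R. updsimpl. mn. reflexivity. }
  assert (HSj : Phi L (S j) = Phi R (S j)).
  { rewrite !Phi_S, BL, BR, Hj. subst L R. updsimpl. mn.
    wk (sym_nat_r M (inp a (S j)) c Hcc) (Bprod a (S j)) (@unit_obj C). reflexivity. }
  assert (Hge : forall i, S j <= i -> Phi L i = Phi R i).
  { apply Phi_agree_after; auto. intros t Ht. subst L R. updsimpl. auto. }
  intros k Hk. destruct k as [|i]; [lia|]. unfold FA. simpl Nat.pred. rewrite BL, BR.
  destruct (Nat.lt_trichotomy i j) as [Hi|[<-|Hi]].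
  - rewrite Hlt by auto. subst L R. updsimpl. reflexivity.
  - rewrite Hj. subst L R. updsimpl. mn.
    pose proof Hca as E. unfold causal in E. rewrite Hcc, Hcd in E.
    wk E (Bprod a (S i)) (@unit_obj C). reflexivity.
  - rewrite Hge by lia. subst L R. updsimpl. reflexivity.
Qed.

(* Rule (IM) is sound: Phi already ends with p at index j, and p commutes
   with the symmetry and is idempotent. *)
Lemma FA_im {C : discard_cat} (a : sms C) j (bk : Mor C) (M : Obj C) (p g : Mor C) :
  dom bk = ten (inp a j) (mem a j) -> cod bk = ten (out a j) M ->
  dom p = M -> idempotent p ->
  dom g = ten (inp a (S j)) M -> cod g = ten (out a (S j)) (mem a (S (S j))) ->
  mem a (S j) = M ->
  wf_sms (im_lhs a j bk p g) -> wf_sms (im_rhs a j bk p g) ->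
  forall k, 1 <= k -> FA k (im_lhs a j bk p g) = FA k (im_rhs a j bk p g).
Proof.
  intros Hbd Hbc Hpd [Hpc Hpp] Hgd Hgc HM WL WR.
  assert (Hpc' : cod p = M) by congruence. clear Hpc.
  rewrite <- HM in Hbc, Hpd, Hgd, Hpc'. clear HM.
  set (L := im_lhs a j bk p g) in *. set (R := im_rhs a j bk p g) in *.
  assert (BL : forall n, Bprod L n = Bprod a n) by (intros; apply Bprod_out; reflexivity).
  assert (BR : forall n, Bprod R n = Bprod a n) by (intros; apply Bprod_out; reflexivity).
  assert (Hle : forall i, i <= j -> Phi L i = Phi R i).
  { intros i Hi. apply Phi_ext; auto; intros t Ht; subst L R; updsimpl; reflexivity. }
  (* Phi L j ends with p, so it absorbs one more p *)
  assert (Hp : Phi L j = comp (tenm (idm (Bprod a (S j))) p) (Phi L j)).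
  { destruct j as [|j'].
    - subst L R. simpl. mn. wk Hpp (out a 0) (@unit_obj C). reflexivity.
    - rewrite !Phi_S, BL. subst L R. updsimpl. mn.
      wk Hpp (ten (Bprod a (S j')) (out a (S j'))) (@unit_obj C). reflexivity. }
  assert (HSj : Phi L (S j) = Phi R (S j)).
  { rewrite !Phi_S, BL, BR, <- (Hle j), Hp by lia. subst L R. updsimpl. mn.
    wk (sym_nat_r (mem a (S j)) (inp a (S j)) p Hpc') (Bprod a (S j)) (@unit_obj C).
    wk Hpp (ten (Bprod a (S j)) (inp a (S j))) (@unit_obj C). reflexivity. }
  assert (Hge : forall i, S j <= i -> Phi L i = Phi R i).
  { apply Phi_agree_after; auto. intros t Ht. subst L R. updsimpl. auto. }
  intros k Hk. destruct k as [|i]; [lia|]. unfold FA. simpl Nat.pred. rewrite BL, BR.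
  destruct (le_lt_dec i j) as [Hi|Hi].
  - rewrite Hle by auto. reflexivity.
  - rewrite Hge by lia. reflexivity.
Qed.

Lemma wf_scomp {C : discard_cat} (g a : sms C) :
  wf_sms a -> wf_sms g -> inp g = out a -> wf_sms (scomp g a).
Proof.
  intros Wa Wg Hio. split.
  - simpl. rewrite (mem0 a Wa), (mem0 g Wg). apply ten_unitl.
  - intros k. simpl. split; dc.
Qed.

Lemma wf_stens {C : discard_cat} (a g : sms C) :
  wf_sms a -> wf_sms g -> wf_sms (stens a g).
Proof.
  intros Wa Wg. split.
  - simpl. rewrite (mem0 a Wa), (mem0 g Wg). apply ten_unitl.
  - intros k. simpl. split; dc.
Qed.

Lemma wf_delay {C : discard_cat} (a : sms C) : wf_sms a -> wf_sms (delay a).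
Proof.
  intros Wa. split; [reflexivity|].
  intros [|[|k]]; simpl; split; dc.
Qed.

Definition const_from {T : Type} (f : nat -> T) (n : nat) : Prop :=
  forall k, n <= k -> f k = f n.

Lemma regular_const_from {C : discard_cat} (a : sms C) :
  regular a <->
  exists n, const_from (inp a) n /\ const_from (out a) n /\
            const_from (mem a) n /\ const_from (lay a) n.
Proof.
  split.
  - intros [n H]. exists n. repeat split; intros k Hk; apply H, Hk.
  - intros (n & Hi & Ho & Hm & Hl). exists n. intros k Hk. auto.
Qed.

Ltac collapse_const :=
  repeat match goal with
         | H : const_from ?f ?n |- context [?f ?k] =>
             tryif constr_eq k n then fail else rewrite (H k) by lia
         end.

Lemma regular_scomp {C : discard_cat} (g a : sms C) :
  regular a -> regular g -> regular (scomp g a).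
Proof.
  rewrite !regular_const_from.
  intros (na & ? & ? & ? & ?) (ng & ? & ? & ? & ?).
  exists (na + ng). repeat split; intros k Hk; simpl; collapse_const; reflexivity.
Qed.

Lemma regular_stens {C : discard_cat} (a g : sms C) :
  regular a -> regular g -> regular (stens a g).
Proof.
  rewrite !regular_const_from.
  intros (na & ? & ? & ? & ?) (ng & ? & ? & ? & ?).
  exists (na + ng). repeat split; intros k Hk; simpl; collapse_const; reflexivity.
Qed.

Lemma regular_delay {C : discard_cat} (a : sms C) : regular a -> regular (delay a).
Proof.
  rewrite !regular_const_from. intros (n & ? & ? & ? & ?).
  exists (S (S n)). repeat split; intros [|[|k]] Hk; try lia; simpl; collapse_const; reflexivity.
Qed.

Lemma good_scomp {C : discard_cat} (g a : sms C) :
  good a -> good g -> inp g = out a -> good (scomp g a).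
Proof. intros [W R] [W' R'] H. split; [apply wf_scomp | apply regular_scomp]; auto. Qed.

Lemma good_stens {C : discard_cat} (a g : sms C) : good a -> good g -> good (stens a g).
Proof. intros [W R] [W' R']. split; [apply wf_stens | apply regular_stens]; auto. Qed.

Lemma good_delay {C : discard_cat} (a : sms C) : good a -> good (delay a).
Proof. intros [W R]. split; [apply wf_delay | apply regular_delay]; auto. Qed.

Definition agree_upto {C : discard_cat} (m : nat) (a b : sms C) : Prop :=
  good a /\ good b /\ parallel a b /\ forall k, 1 <= k -> k <= m -> FA k a = FA k b.

Ltac agree_split := split; [|split; [|split; [split|]]].

Lemma agree_upto_mono {C : discard_cat} m i (a b : sms C) :
  i <= m -> agree_upto m a b -> agree_upto i a b.
Proof.
  intros Hi (Ga & Gb & [Pi Po] & H). agree_split; auto. intros k Hk1 Hk2. apply H; lia.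
Qed.

Lemma agree_upto_sym {C : discard_cat} m (a b : sms C) :
  agree_upto m a b -> agree_upto m b a.
Proof.
  intros (Ga & Gb & [Pi Po] & H). agree_split; auto; intros; symmetry; auto.
Qed.

Lemma agree_upto_trans {C : discard_cat} m (a b c : sms C) :
  agree_upto m a b -> agree_upto m b c -> agree_upto m a c.
Proof.
  intros (Ga & Gb & [Pi Po] & H) (_ & Gc & [Pi' Po'] & H').
  agree_split; auto; try congruence. intros. rewrite H, H'; auto.
Qed.

Lemma agree_upto_postcomp {C : discard_cat} m (a b g : sms C) :
  agree_upto m a b -> good g -> out a = inp g -> agree_upto m (scomp g a) (scomp g b).
Proof.
  intros (Ga & Gb & [Pi Po] & H) Gg Ho.
  pose proof Ga as [Wa _]; pose proof Gb as [Wb _]; pose proof Gg as [Wg _].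
  agree_split; try (apply good_scomp; auto; congruence); simpl; try congruence.
  intros k Hk1 Hk2. rewrite !FA_scomp, H by (auto; congruence). reflexivity.
Qed.

Lemma agree_upto_precomp {C : discard_cat} m (a b g : sms C) :
  agree_upto m a b -> good g -> out g = inp a -> agree_upto m (scomp a g) (scomp b g).
Proof.
  intros (Ga & Gb & [Pi Po] & H) Gg Ho.
  pose proof Ga as [Wa _]; pose proof Gb as [Wb _]; pose proof Gg as [Wg _].
  agree_split; try (apply good_scomp; auto; congruence); simpl; try congruence.
  intros k Hk1 Hk2. rewrite !FA_scomp, H by (auto; congruence). reflexivity.
Qed.

Lemma agree_upto_tensl {C : discard_cat} m (a b g : sms C) :
  agree_upto m a b -> good g -> agree_upto m (stens g a) (stens g b).
Proof.
  intros (Ga & Gb & [Pi Po] & H) Gg.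
  pose proof Ga as [Wa _]; pose proof Gb as [Wb _]; pose proof Gg as [Wg _].
  agree_split; try (apply good_stens; auto); simpl; try (rewrite Pi || rewrite Po; reflexivity).
  intros k Hk1 Hk2. rewrite !FA_stens, H, Pi, Po by auto. reflexivity.
Qed.

Lemma agree_upto_tensr {C : discard_cat} m (a b g : sms C) :
  agree_upto m a b -> good g -> agree_upto m (stens a g) (stens b g).
Proof.
  intros (Ga & Gb & [Pi Po] & H) Gg.
  pose proof Ga as [Wa _]; pose proof Gb as [Wb _]; pose proof Gg as [Wg _].
  agree_split; try (apply good_stens; auto); simpl; try (rewrite Pi || rewrite Po; reflexivity).
  intros k Hk1 Hk2. rewrite !FA_stens, H, Pi, Po by auto. reflexivity.
Qed.

Lemma agree_upto_delay {C : discard_cat} m (a b : sms C) :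
  agree_upto m a b -> agree_upto (S m) (delay a) (delay b).
Proof.
  intros (Ga & Gb & [Pi Po] & H).
  pose proof Ga as [Wa _]; pose proof Gb as [Wb _].
  agree_split; [apply good_delay; auto | apply good_delay; auto
               | simpl; rewrite Pi; reflexivity | simpl; rewrite Po; reflexivity |].
  intros [|[|k]] Hk1 Hk2; [lia | apply FA1_delay |].
  rewrite !FA_delay by (auto; lia). apply H; lia.
Qed.

(* For the coinduction rule, the
   hypotheses D a_(n+1) = D b_(n+1) added at each stage are justified by an
   induction on the depth: agreement of a_(n+1), b_(n+1) up to depth i gives
   agreement of their delays up to depth i+1, hence of a_n, b_n. *)
Lemma derives_agree_upto {C : discard_cat} (G : eqns C) (a b : sms C) :
  derives G a b -> forall m, (forall x y, G x y -> agree_upto m x y) -> agree_upto m a b.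
Proof.
  induction 1 as [G a b Hab | G a j bk N M c g Hbd Hbc Hcd Hcc Hca Hgd Hgc L R GL GR
                 | G a j bk M p g Hbd Hbc Hpd Hp Hgd Hgc HM L R GL GR
                 | G a Ga | G a b _ IH | G a b c _ IH1 _ IH2
                 | G a b g _ IH Gg Ho | G a b g _ IH Gg Ho | G a b g _ IH Gg | G a b g _ IH Gg
                 | G a b Hgood _ IHc];
    intros m HG.
  - auto.
  - agree_split; auto. intros k Hk _.
    apply (FA_cm a j bk N M c g); auto; [apply GL | apply GR].
  - agree_split; auto. intros k Hk _.
    apply (FA_im a j bk M p g); auto; [apply GL | apply GR].
  - agree_split; auto.
  - apply agree_upto_sym; auto.
  - eapply agree_upto_trans; eauto.
  - apply agree_upto_postcomp; auto.
  - apply agree_upto_precomp; auto.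
  - apply agree_upto_tensl; auto.
  - apply agree_upto_tensr; auto.
  - assert (Hdepth : forall i, i <= m -> forall n, agree_upto i (a n) (b n)).
    { induction i as [|i IHi]; intros Hi n.
      - destruct (Hgood n) as (Ga & Gb & [Pi Po]). agree_split; auto; lia.
      - apply IHc. intros x y [Hxy | [-> ->]].
        + apply (agree_upto_mono m); auto.
        + apply agree_upto_delay, IHi; lia. }
    apply Hdepth; auto.
Qed.

Theorem lemma4 (C : discard_cat) (a b : sms C) :
  good a -> good b -> inp a = inp b -> out a = out b ->
  sequiv a b ->
  forall k : nat, 1 <= k -> FA k a = FA k b.
Proof.
  intros _ _ _ _ Hab k Hk.
  destruct (derives_agree_upto _ a b Hab k (fun x y (f : False) => match f with end))
    as (_ & _ & _ & H).
  apply H; auto.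
Qed.
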